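(* Let $p$ be a prime, $n>2$ an integer with $n=st$ where $s,t$ are positive integers with $\gcd(s,t)=1$, and fix $c\in\mathbb{F}_{p^n}$ with $c\neq 1$. Let $f:\mathbb{F}_{p^t}\to\mathbb{F}_{p^t}$, $g:\mathbb{F}_{p^s}\to\mathbb{F}_{p^s}$ and $h:\mathbb{F}_{p^n}\to\mathbb{F}_{p^n}$ be functions, and define $F:\mathbb{F}_{p^n}\to\mathbb{F}_{p^n}$ by $F(x)=f(x)$ if $x\in\mathbb{F}_{p^t}$, $F(x)=g(x)$ if $x\in\mathbb{F}_{p^s}\setminus\mathbb{F}_{p^t}$, and $F(x)=h(x)$ if $x\notin\mathbb{F}_{p^s}\cup\mathbb{F}_{p^t}$. Let $\{g_1=1,g_2,\ldots,g_s\}$ be a basis of $\mathbb{F}_{p^n}$ over $\mathbb{F}_{p^t}$ and $\{g_1'=1,g_2',\ldots,g_t'\}$ a basis of $\mathbb{F}_{p^n}$ over $\mathbb{F}_{p^s}$, and write $c=\sum_{i=1}^s c_ig_i=\sum_{i=1}^t c_i'g_i'$ with $c_i\in\mathbb{F}_{p^t}$, $c_i'\in\mathbb{F}_{p^s}$. Then $\delta_{F,c}\leq \delta_{f,0}+\delta_{g,0}+\delta_{h,0}$ if $c=0$, and if $c\neq 0$, \[ \delta_{F,c}\leq\max\Big\{\delta_{f,c_1}+\delta_{g,c_1'}+\delta_{h,c},\ \delta_{f,c_1}+2p^s\delta_{h,0}+\delta_{h,c},\ 1+p^t\delta_{h,0}+\min\{p^t\delta_{g,0},p^s\delta_{f,0}\}+\delta_{g,c_1'}+\delta_{h,c},\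 (2p^t+2p^s)\delta_{h,0}+\delta_{h,c}\Big\}. \]
   Context: For a finite field $\mathbb{F}_{p^r}$, a function $u:\mathbb{F}_{p^r}\to\mathbb{F}_{p^r}$ and $c'\in\mathbb{F}_{p^r}$, let ${}_{c'}\Delta_u(a,b)=\#\{x\in\mathbb{F}_{p^r}: u(x+a)-c'u(x)=b\}$ and define the $c'$-differential uniformity $\delta_{u,c'}=\max\{{}_{c'}\Delta_u(a,b): a,b\in\mathbb{F}_{p^r},\ a\neq 0\text{ if } c'=1\}$. In particular $\delta_{u,0}=\max_b \#u^{-1}(b)$. *)

From HB Require Import structures.
From mathcomp Require Import all_boot all_order all_algebra.
Set Implicit Arguments. Unset Strict Implicit. Unset Printing Implicit Defensive.
Import GRing.Theory.
Local Open Scope ring_scope.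

(* The subfield F_{p^k} of a finite field L of characteristic p:
   the set of roots of X^(p^k) - X in L. *)
Definition subF (L : finFieldType) (p k : nat) : {set L} :=
  [set x : L | x ^+ (p ^ k) == x].

(* c'-differential uniformity of u restricted to the domain D (a subfield),
   i.e. of u : D -> D:
   max over a, b in D (a <> 0 if c' = 1) of #{x in D | u(x+a) - c' u(x) = b}. *)
Definition cdu (L : finFieldType) (D : {set L}) (u : L -> L) (c' : L) : nat :=
  (\max_(a in D | (c' != 1%R) || (a != 0%R))
     \max_(b in D) #|[set x in D | (u (x + a) - c' * u x)%R == b]|)%N.

Definition pieceF (L : finFieldType) (Kt Ks : {set L}) (f g h : L -> L) (x : L) : L :=
  if x \in Kt then f x else if x \in Ks then g x else h x.

From HB Require Import structures.
From mathcomp Require Import all_boot all_order all_algebra.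
Set Implicit Arguments. Unset Strict Implicit. Unset Printing Implicit Defensive.
Import GRing.Theory.
Local Open Scope ring_scope.

(* For c = 0 the c-differential uniformity is the largest fibre size, and a
   fibre of F is covered by fibres of f, g and h.  For c <> 0 the last term of
   the maximum already suffices: F agrees with h off T = F_{p^t} \cup F_{p^s},
   so among the solutions of F(x + a) - c F(x) = b all but at most 2 #|T| are
   solutions of the same equation for h, and 2 #|T| <= 2 (p^t + p^s) is
   absorbed by (2 p^t + 2 p^s) delta_{h,0} since delta_{h,0} >= 1.  The bases
   and the coordinates of c are not needed. *)

Lemma card_subF (L : finFieldType) (p k : nat) :
  (1 < p)%N -> (0 < k)%N -> (#|subF L p k| <= p ^ k)%N.
Proof.
move=> p_gt1 k_gt0; have pk_gt1 := leq_ltn_trans k_gt0 (ltn_expl k p_gt1).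
set m := (p ^ k)%N in pk_gt1 *.
have size_P : size ('X^m - 'X : {poly L}) = m.+1.
  by rewrite size_polyDl ?size_polyXn // size_polyN size_polyX.
have P_neq0 : ('X^m - 'X : {poly L}) != 0 by rewrite -size_poly_eq0 size_P.
rewrite cardE -ltnS -size_P; apply: max_poly_roots P_neq0 _ (enum_uniq _).
by apply/allP => x; rewrite mem_enum inE rootE !hornerE => /eqP->; rewrite subrr.
Qed.

Lemma mem0_subF (L : finFieldType) (p k : nat) :
  (0 < p)%N -> (0 : L) \in subF L p k.
Proof. by move=> p_gt0; rewrite inE expr0n expn_eq0 gtn_eqF. Qed.

Section DifferentialUniformity.

Variables (L : finFieldType) (D : {set L}) (u : L -> L).

Lemma leq_cdu (c a b : L) :
  a \in D -> b \in D -> (c != 1) || (a != 0) ->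
  (#|[set x in D | (u (x + a) - c * u x)%R == b]| <= cdu D u c)%N.
Proof.
move=> aD bD ca; apply: (bigmax_sup a); first by rewrite aD.
exact: (bigmax_sup b).
Qed.

Hypothesis D0 : (0 : L) \in D.

Lemma leq_cdu0 (b : L) : b \in D -> (#|[set x in D | u x == b]| <= cdu D u 0%R)%N.
Proof.
move=> bD; apply: leq_trans (leq_cdu D0 bD _); last by rewrite eq_sym oner_eq0.
by apply: subset_leq_card; apply/subsetP => x; rewrite !inE addr0 mul0r subr0.
Qed.

Lemma cdu0_gt0 : u 0 \in D -> (0 < cdu D u 0%R)%N.
Proof.
move=> u0D; apply: leq_trans _ (leq_cdu0 u0D).
by rewrite card_gt0; apply/set0Pn; exists 0; rewrite !inE D0 eqxx.
Qed.

Lemma card_fibre_le_cdu0 (b : L) :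
  {homo u : x / x \in D} -> (#|[set x in D | u x == b]| <= cdu D u 0%R)%N.
Proof.
move=> uD; have [bD|bND] := boolP (b \in D); first exact: leq_cdu0.
suff -> : [set x in D | u x == b] = set0 by rewrite cards0.
apply/setP => x; rewrite !inE; apply/andP => -[/uD uxD /eqP uxb].
by rewrite -uxb uxD in bND.
Qed.

End DifferentialUniformity.

Lemma cdu0_setT_le (L : finFieldType) (u : L -> L) (m : nat) :
  (forall b, #|[set x | u x == b]| <= m)%N -> (cdu [set: L] u 0%R <= m)%N.
Proof.
move=> fibre_le; apply/bigmax_leqP => a _; apply/bigmax_leqP => b _.
have -> : [set x in [set: L] | u (x + a) - 0 * u x == b]
        = (+%R^~ a) @^-1: [set x | u x == b].
  by apply/setP => x; rewrite !inE mul0r subr0.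
by rewrite card_preimset //; exact: addIr.
Qed.

Lemma cdu_setT_le_agree_off (L : finFieldType) (T : {set L}) (F h : L -> L) (c : L) :
  c != 1 -> {in ~: T, F =1 h} ->
  (cdu [set: L] F c <= 2 * #|T| + cdu [set: L] h c)%N.
Proof.
move=> c_neq1 eqFh; apply/bigmax_leqP => a _; apply/bigmax_leqP => b _.
set E := [set x | (x \in T) || (x + a \in T)].
have cover : [set x in [set: L] | F (x + a) - c * F x == b]
    \subset E :|: [set x in [set: L] | h (x + a) - c * h x == b].
  apply/subsetP => x; rewrite !inE.
  have [//|xNT] := boolP (x \in T).
  have [//|xaNT] := boolP (x + a \in T).
  by rewrite !eqFh ?inE.
have card_E : (#|E| <= 2 * #|T|)%N.
  have -> : E = T :|: (+%R^~ a) @^-1: T by apply/setP => x; rewrite !inE.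
  rewrite mul2n -addnn (leq_trans (leq_card_setU _ _)) // card_preimset //.
  exact: addIr.
apply: leq_trans (subset_leq_card cover) _.
apply: leq_trans (leq_card_setU _ _) _.
by rewrite leq_add // leq_cdu ?in_setT ?c_neq1.
Qed.

Lemma cdu0_pieceF_le (L : finFieldType) (Kt Ks : {set L}) (f g h : L -> L) :
  (0 : L) \in Kt -> (0 : L) \in Ks ->
  {homo f : x / x \in Kt} -> {homo g : x / x \in Ks} ->
  (cdu [set: L] (pieceF Kt Ks f g h) 0%R
     <= cdu Kt f 0%R + cdu Ks g 0%R + cdu [set: L] h 0%R)%N.
Proof.
move=> Kt0 Ks0 fKt gKs; apply: cdu0_setT_le => b.
have cover : [set x | pieceF Kt Ks f g h x == b]
    \subset [set x in Kt | f x == b] :|: [set x in Ks | g x == b]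
            :|: [set x in [set: L] | h x == b].
  apply/subsetP => x; rewrite !inE /pieceF.
  by case: (x \in Kt) => [->|]; last case: (x \in Ks) => [->|->]; rewrite ?orbT.
apply: leq_trans (subset_leq_card cover) _.
apply: leq_trans (leq_card_setU _ _) _; rewrite leq_add ?leq_cdu0 ?in_setT //.
apply: leq_trans (leq_card_setU _ _) _.
by rewrite leq_add ?card_fibre_le_cdu0.
Qed.

Theorem theorem2p6 (p n s t : nat) (L : finFieldType)
  (hp : prime p) (hL : #|L| = (p ^ n)%N) (hn : (2 < n)%N)
  (hs : (0 < s)%N) (ht : (0 < t)%N) (hst : n = (s * t)%N) (hcop : coprime s t)
  (c : L) (hc1 : c != 1)
  (f g h : L -> L)
  (hf : forall x, x \in subF L p t -> f x \in subF L p t)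
  (hg : forall x, x \in subF L p s -> g x \in subF L p s)
  (gb gb' : nat -> L) (hgb0 : gb 0%N = 1) (hgb0' : gb' 0%N = 1)
  (hgb_free : forall lam : nat -> L, (forall i, (i < s)%N -> lam i \in subF L p t) ->
      \sum_(i < s) lam i * gb i = 0 -> forall i, (i < s)%N -> lam i = 0)
  (hgb_span : forall y : L, exists2 lam : nat -> L,
      (forall i, (i < s)%N -> lam i \in subF L p t) & y = \sum_(i < s) lam i * gb i)
  (hgb'_free : forall lam : nat -> L, (forall i, (i < t)%N -> lam i \in subF L p s) ->
      \sum_(i < t) lam i * gb' i = 0 -> forall i, (i < t)%N -> lam i = 0)
  (hgb'_span : forall y : L, exists2 lam : nat -> L,
      (forall i, (i < t)%N -> lam i \in subF L p s) & y = \sum_(i < t) lam i * gb' i)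
  (cc cc' : nat -> L)
  (hcc : forall i, (i < s)%N -> cc i \in subF L p t)
  (hcc' : forall i, (i < t)%N -> cc' i \in subF L p s)
  (hcdec : c = \sum_(i < s) cc i * gb i)
  (hcdec' : c = \sum_(i < t) cc' i * gb' i) :
  let Kt := subF L p t in
  let Ks := subF L p s in
  let KL := [set: L] in
  let F := pieceF Kt Ks f g h in
  (c = 0 ->
     (cdu KL F 0%R <= cdu Kt f 0%R + cdu Ks g 0%R + cdu KL h 0%R)%N) /\
  (c != 0 ->
     (cdu KL F c <=
       maxn (maxn
         (cdu Kt f (cc 0%N) + cdu Ks g (cc' 0%N) + cdu KL h c)
         (cdu Kt f (cc 0%N) + 2 * p ^ s * cdu KL h 0%R + cdu KL h c))
       (maxn
         (1 + p ^ t * cdu KL h 0%R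
            + minn (p ^ t * cdu Ks g 0%R) (p ^ s * cdu Kt f 0%R)
            + cdu Ks g (cc' 0%N) + cdu KL h c)
         ((2 * p ^ t + 2 * p ^ s) * cdu KL h 0%R + cdu KL h c)))%N).
Proof.
move=> Kt Ks KL F; have p_gt0 := prime_gt0 hp.
split=> [_|_]; first by rewrite cdu0_pieceF_le ?mem0_subF.
apply: leq_trans _ (leq_maxr _ _); apply: leq_trans _ (leq_maxr _ _).
have F_eq_h : {in ~: (Kt :|: Ks), F =1 h}.
  by move=> x; rewrite in_setC in_setU negb_or /F /pieceF => /andP[/negbTE-> /negbTE->].
apply: leq_trans (cdu_setT_le_agree_off hc1 F_eq_h) _.
have card_T : (#|Kt :|: Ks| <= p ^ t + p ^ s)%N.
  by rewrite (leq_trans (leq_card_setU _ _)) // leq_add // card_subF ?prime_gt1.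
have h0_gt0 : (0 < cdu KL h 0%R)%N by rewrite cdu0_gt0 ?in_setT.
rewrite leq_add2r -mulnDr (leq_trans _ (leq_pmulr _ h0_gt0)) //.
by rewrite leq_mul2l card_T orbT.
Qed.
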